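(* Let $n\ge2$ and for $\lambda\in[-1,1]$ let $C_\lambda(\mathbf u)=\prod_{i=1}^n u_i\big[1+\lambda\prod_{i=1}^n(1-u_i)\big]$, $\mathbf u\in[0,1]^n$. Let $\alpha\in\{-1,1\}^n$ and $J=\{i\in\{1,\dots,n\}:\alpha_i=1\}$. If $|J|$ is even, then $C_\lambda$ is $I(\alpha)$ for every $\lambda\in[0,1]$; if $|J|$ is odd, then $C_\lambda$ is $I(\alpha)$ for every $\lambda\in[-1,0]$.
   Context: For $\alpha\in\{-1,1\}^n$ and a random vector $\mathbf X$, write $\alpha\mathbf X=(\alpha_1X_1,\dots,\alpha_nX_n)$; inequalities between vectors are componentwise. $\mathbf X$ is $I(\alpha)$ if for every $\mathbf x\in\mathbb R^n$, $\mathbb P[\alpha\mathbf X>\mathbf x\mid \alpha\mathbf X>\mathbf x']\le \mathbb P[\alpha\mathbf X>\mathbf x\mid \alpha\mathbf X>\mathbf x'']$ whenever $\mathbf x'\le\mathbf x''$ and $\mathbb P[\alpha\mathbf X>\mathbf x'']>0$. A copula is $I(\alpha)$ if a random vector with that distribution function is. $C_\lambda$ is an $n$-copula for each $\lambda\in[-1,1]$. *)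

From HB Require Import structures.
From mathcomp Require Import all_boot all_order all_algebra.
From mathcomp Require Import all_classical all_reals all_analysis.
Set Implicit Arguments. Unset Strict Implicit. Unset Printing Implicit Defensive.
Import Order.TTheory GRing.Theory Num.Theory.
Local Open Scope classical_set_scope.
Local Open Scope ring_scope.

Definition Clam (R : realType) (n : nat) (lam : R) (u : 'I_n -> R) : R :=
  (\prod_(i < n) u i) * (1 + lam * \prod_(i < n) (1 - u i)).

(* clamping to [0,1]: a copula C, viewed as a distribution function on R^n,
   is F(x) = C(clamp x_1, ..., clamp x_n). *)
Definition clamp01 (R : realType) (x : R) : R := Num.min 1 (Num.max 0 x).

Definition has_copula_df (R : realType) (n : nat) (d : measure_display)
  (T : measurableType d) (P : probability T R) (X : 'I_n -> T -> R)
  (C : ('I_n -> R) -> R) : Prop :=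
  (forall i, measurable_fun setT (X i)) /\
  forall x : 'I_n -> R,
    P [set t | forall i, X i t <= x i] = (C (fun i => clamp01 (x i)))%:E.

Definition alpha_gt (R : realType) (n : nat) (T : Type) (X : 'I_n -> T -> R)
  (alpha : 'I_n -> R) (x : 'I_n -> R) : set T :=
  [set t | forall i, alpha i * X i t > x i].

Definition cond_prob (R : realType) (d : measure_display) (T : measurableType d)
  (P : probability T R) (A B : set T) : R :=
  fine (P (A `&` B)) / fine (P B).

Definition is_I_alpha (R : realType) (n : nat) (d : measure_display)
  (T : measurableType d) (P : probability T R) (X : 'I_n -> T -> R)
  (alpha : 'I_n -> R) : Prop :=
  forall x x' x'' : 'I_n -> R,
    (forall i, x' i <= x'' i) ->
    (0 < P (alpha_gt X alpha x''))%E ->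
    cond_prob P (alpha_gt X alpha x) (alpha_gt X alpha x')
      <= cond_prob P (alpha_gt X alpha x) (alpha_gt X alpha x'').

Definition copula_I_alpha (R : realType) (n : nat) (C : ('I_n -> R) -> R)
  (alpha : 'I_n -> R) : Prop :=
  forall (d : measure_display) (T : measurableType d) (P : probability T R)
    (X : 'I_n -> T -> R), has_copula_df P X C -> is_I_alpha P X alpha.

From HB Require Import structures.
From mathcomp Require Import all_boot all_order all_algebra.
From mathcomp Require Import all_classical all_reals all_analysis.
From mathcomp Require Import ring lra measurable_realfun.
Import Order.TTheory GRing.Theory Num.Theory.
Local Open Scope ring_scope.

(* If X has copula C_lam then, since C_lam(u) = prod u_i + lam * prod u_i (1 - u_i) is a sum of
   two products, inclusion-exclusion over boxes acts factorwise; as the X_i are almost surely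
   in [0, 1] and have no atoms, this gives P[alpha X > x] = C_mu(u) with u_i = P[alpha_i X_i > x_i]
   and mu = (-1)^|J| lam, the factor u (1 - u) changing sign on the coordinates in J.  The
   hypotheses on lam say exactly that 0 <= mu <= 1.  As {alpha X > x} and {alpha X > x'}
   intersect in {alpha X > max x x'}, the I(alpha) property becomes: the ratio
   C_mu(min v w) / C_mu(w) is nonincreasing in w in (0, 1]^n.  Along one coordinate,
   C_mu(w) = A * w_j (1 + (1 - w_j) Z) with Z = mu * prod_(i != j) (1 - w_i), which reduces the
   claim to an elementary inequality for p |-> p (1 + (1 - p) Z); moving one coordinate at a
   time gives the general case. *)

Lemma coordinatewise_antitone (R : numDomainType) (n : nat) (D : R -> Prop)
    (F : ('I_n -> R) -> R) :
  (forall (w w' : 'I_n -> R) (j : 'I_n), (forall i, D (w i)) -> (forall i, D (w' i)) ->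
     (forall i, i != j -> w' i = w i) -> w j <= w' j -> F w' <= F w) ->
  forall w w' : 'I_n -> R, (forall i, D (w i)) -> (forall i, D (w' i)) ->
    (forall i, w i <= w' i) -> F w' <= F w.
Proof.
move=> Fstep w w' Dw Dw' le_ww'.
pose mix k (i : 'I_n) := if (i < k)%N then w' i else w i.
have Dmix k i : D (mix k i) by rewrite /mix; case: ifP.
have -> : w' = mix n by apply/funext => i; rewrite /mix ltn_ord.
suff le_mix k : (k <= n)%N -> F (mix k) <= F w by exact: le_mix.
elim: k => [|k IH] kn; first by have -> : mix 0%N = w by apply/funext.
apply: le_trans (IH (ltnW kn)).
apply: (Fstep _ _ (Ordinal kn)) => // [i /eqP ij|]; rewrite /mix /= ltnS.
  rewrite leq_eqVlt (_ : nat_of_ord i == k = false) //.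
  by apply/eqP => ik; apply: ij; exact: val_inj.
by rewrite leqnn ltnn.
Qed.

Section clam1.
Context {R : realFieldType}.
Implicit Types Y Z c p q : R.

Definition clam1 Z p : R := p * (1 + (1 - p) * Z).

Lemma clam1_ge0 Z p : 0 <= Z -> 0 <= p -> p <= 1 -> 0 <= clam1 Z p.
Proof.
move=> Z0 p0 p1; apply: mulr_ge0 => //.
by rewrite -[0]addr0 lerD ?ler01 ?mulr_ge0 ?subr_ge0.
Qed.

Lemma clam1_le Z p q : 0 <= Z <= 1 -> 0 <= p -> p <= q -> q <= 1 ->
  clam1 Z p <= clam1 Z q.
Proof.
move=> /andP[Z0 Z1] p0 pq q1.
have diff : clam1 Z q - clam1 Z p = (q - p) * ((1 - Z) + Z * (2 - p - q)).
  by rewrite /clam1; ring.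
rewrite -subr_ge0 diff; apply: mulr_ge0; first lra.
by apply: addr_ge0; [lra|apply: mulr_ge0 => //; lra].
Qed.

Lemma clam1_exchange Z Y p q : Z <= Y -> 0 <= p -> p <= q ->
  clam1 Y q * clam1 Z p <= clam1 Y p * clam1 Z q.
Proof.
move=> ZY p0 pq.
have diff : clam1 Y p * clam1 Z q - clam1 Y q * clam1 Z p = p * q * ((Y - Z) * (q - p)).
  by rewrite /clam1; ring.
by rewrite -subr_ge0 diff !mulr_ge0 // ?subr_ge0 // (le_trans p0).
Qed.

Lemma clam1_min_exchange c Z Y p q : 0 <= Z -> Z <= Y -> Y <= 1 -> 0 <= c -> c <= 1 ->
  0 <= p -> p <= q -> q <= 1 ->
  clam1 Y (Num.min c q) * clam1 Z p <= clam1 Y (Num.min c p) * clam1 Z q.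
Proof.
move=> Z0 ZY Y1 c0 c1 p0 pq q1.
have Z01 : 0 <= Z <= 1 by rewrite Z0 (le_trans ZY).
have Y0 : 0 <= Y := le_trans Z0 ZY.
have [cp|pc] := leP c p.
  rewrite (min_l (le_trans cp pq)).
  by apply: ler_wpM2l; [exact: clam1_ge0 Y0 c0 c1|exact: clam1_le].
have [cq|qc] := leP c q; last exact: clam1_exchange.
apply: le_trans (clam1_exchange Z Y p c ZY p0 (ltW pc)) _.
have p1 : p <= 1 := le_trans pq q1.
by apply: ler_wpM2l; [exact: clam1_ge0 Y0 p0 p1|exact: clam1_le].
Qed.
End clam1.

Section Clam_ratio.
Context {R : realType} {n : nat}.
Implicit Types (mu : R) (u w : 'I_n -> R).

Lemma Clam_bigD1 mu u j : Clam mu u =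
  (\prod_(i | i != j) u i) * clam1 (mu * \prod_(i | i != j) (1 - u i)) (u j).
Proof. by rewrite /Clam (bigD1 j) //= [\prod_i (1 - _)](bigD1 j) //= /clam1; ring. Qed.

Lemma Clam_eq0 mu u j : u j = 0 -> Clam mu u = 0.
Proof. by move=> uj0; rewrite (Clam_bigD1 _ _ j) uj0 /clam1 !mul0r mulr0. Qed.

Lemma Clam_gt0 mu w : 0 <= mu -> (forall i, 0 < w i <= 1) -> 0 < Clam mu w.
Proof.
move=> mu0 w01; rewrite /Clam mulr_gt0 //; first by apply: prodr_gt0 => i _; case/andP: (w01 i).
apply: lt_le_trans ltr01 _; rewrite lerDl mulr_ge0 // prodr_ge0 // => i _.
by rewrite subr_ge0; case/andP: (w01 i).
Qed.

Variables (mu : R) (v : 'I_n -> R).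
Hypotheses (mu0 : 0 <= mu) (mu1 : mu <= 1) (v0 : forall i, 0 <= v i) (v1 : forall i, v i <= 1).

Lemma Clam_min_step w w' j : (forall i, 0 <= w i) -> (forall i, w' i <= 1) ->
  (forall i, i != j -> w' i = w i) -> w j <= w' j ->
  Clam mu (v \min w') * Clam mu w <= Clam mu (v \min w) * Clam mu w'.
Proof.
move=> w0 w'1 ww' le_j.
have w1 i : w i <= 1.
  by have [->|/ww' <-] := eqVneq i j; [exact: le_trans le_j (w'1 j)|].
have vw0 i : 0 <= (v \min w) i by rewrite /= le_min v0 w0.
rewrite !(Clam_bigD1 _ _ j).
rewrite [\prod_(i | i != j) (v \min w') i](eq_bigr (v \min w)); last first.
  by move=> i /ww' /= ->.
rewrite [\prod_(i | i != j) (1 - _ i)](eq_bigr (fun i => 1 - (v \min w) i)); last first.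
  by move=> i /ww' /= ->.
rewrite [\prod_(i | i != j) w' i](eq_bigr w); last by move=> i /ww'.
rewrite [\prod_(i | i != j) (1 - w' i)](eq_bigr (fun i => 1 - w i)); last by move=> i /ww' ->.
set A := \prod_(i | i != j) (v \min w) i; set B := \prod_(i | i != j) w i.
set Y := mu * _; set Z := mu * _.
have Z0 : 0 <= Z by rewrite mulr_ge0 // prodr_ge0 // => i _; rewrite subr_ge0.
have ZY : Z <= Y.
  apply: ler_wpM2l => //; apply: ler_prod => i _.
  by rewrite subr_ge0 w1 /= lerD2l lerN2 ge_min lexx orbT.
have Y1 : Y <= 1.
  rewrite -[1]mulr1; apply: ler_pM => //.
    by rewrite prodr_ge0 // => i _; rewrite subr_ge0 ge_min v1.
  apply: Num.Theory.prodr_ile1 => i _ /=.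
  by rewrite subr_ge0 ge_min v1 lerBlDr lerDl le_min v0 w0.
have AB0 : 0 <= A * B by rewrite mulr_ge0 // prodr_ge0.
have := ler_wpM2l AB0 (clam1_min_exchange (v j) Z Y (w j) (w' j)
  Z0 ZY Y1 (v0 j) (v1 j) (w0 j) le_j (w'1 j)).
by move=> /=; lra.
Qed.

Lemma Clam_min_ratio_antitone w w' :
  (forall i, 0 < w i) -> (forall i, w i <= w' i) -> (forall i, w' i <= 1) ->
  Clam mu (v \min w') / Clam mu w' <= Clam mu (v \min w) / Clam mu w.
Proof.
move=> w0 ww' w'1.
have w1 i : w i <= 1 := le_trans (ww' i) (w'1 i).
pose ratio u := Clam mu (v \min u) / Clam mu u.
apply: (@coordinatewise_antitone _ _ (fun p => 0 < p <= 1) ratio) => //;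
  [move=> u u' j u01 u'01 uu' le_j|move=> i..].
- rewrite /ratio ler_pdivrMr ?Clam_gt0 // mulrAC ler_pdivlMr ?Clam_gt0 //.
  apply: (@Clam_min_step u u' j) => // i; [exact/ltW/(andP (u01 i)).1|exact: (andP (u'01 i)).2].
- by rewrite w0 w1.
- by rewrite (lt_le_trans (w0 i) (ww' i)) w'1.
Qed.

End Clam_ratio.

Lemma ord_exists_neq {n : nat} : (1 < n)%N -> forall i : 'I_n, exists k, k != i.
Proof.
move=> n2 i; have n0 : (0 < n)%N := ltnW n2.
have [->|i0] := eqVneq i (Ordinal n0); first by exists (Ordinal n2).
by exists (Ordinal n0); rewrite eq_sym.
Qed.

Section clamp01.
Context {R : realType}.
Implicit Types x y : R.

Lemma clamp01E x : clamp01 x = if x <= 0 then 0 else if x <= 1 then x else 1.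
Proof.
rewrite /clamp01; case: (lerP x 0) => [x0|x0]; first exact: min_r.
by case: (lerP x 1).
Qed.

Lemma clamp01_ge0 x : 0 <= clamp01 x.
Proof.
by rewrite clamp01E; case: (lerP x 0) => // x0; case: (lerP x 1) => // _; exact: ltW.
Qed.

Lemma clamp01_le1 x : clamp01 x <= 1.
Proof. by rewrite clamp01E; case: (lerP x 0) => // _; case: (lerP x 1). Qed.

Lemma clamp01_ge1 x : 1 <= x -> clamp01 x = 1.
Proof.
move=> x1; rewrite clamp01E; case: (lerP x 0) => x0; first lra.
by case: (lerP x 1) => // ?; lra.
Qed.

Lemma le_clamp01 x y : x <= y -> clamp01 x <= clamp01 y.
Proof.
move=> xy; rewrite !clamp01E.
by case: (lerP x 0); case: (lerP y 0); case: (lerP x 1); case: (lerP y 1); lra.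
Qed.

Lemma clamp01_lipschitz x y : x <= y -> clamp01 y - clamp01 x <= y - x.
Proof.
move=> xy; rewrite !clamp01E.
by case: (lerP x 0); case: (lerP y 0); case: (lerP x 1); case: (lerP y 1); lra.
Qed.

End clamp01.

Lemma alpha_gtI (R : realType) (n : nat) (T : Type) (X : 'I_n -> T -> R)
    (alpha x x' : 'I_n -> R) :
  (alpha_gt X alpha x `&` alpha_gt X alpha x' =
   alpha_gt X alpha (fun i => Num.max (x i) (x' i)))%classic.
Proof.
apply/seteqP; split => t /=; first by move=> [h h'] i; rewrite gt_max h h'.
by move=> h; split => i; have := h i; rewrite gt_max => /andP[].
Qed.

Definition incr {R : comNzRingType} {n : nat} (h : R -> R) (s : seq 'I_n)
  (a b : 'I_n -> R) (i : 'I_n) : R := h (b i) - (if i \in s then h (a i) else 0).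

Lemma prod_incr_cons (R : comNzRingType) (n : nat) (h : R -> R) (j : 'I_n) s
    (a b : 'I_n -> R) :
  j \notin s -> \prod_i incr h (j :: s) a b i =
  \prod_i incr h s a b i - \prod_i incr h s a (fun i => if i == j then a j else b i) i.
Proof.
move=> js; rewrite (bigD1 j) //= [\prod_i incr h s a b i](bigD1 j) //=.
rewrite [\prod_i incr h s a _ i](bigD1 j) //= /incr eqxx mem_head (negbTE js).
have -> : \prod_(i | i != j) (h (b i) - (if i \in j :: s then h (a i) else 0)) =
    \prod_(i | i != j) (h (b i) - (if i \in s then h (a i) else 0)).
  by apply: eq_bigr => i ij; rewrite in_cons (negbTE ij).
have -> : \prod_(i | i != j) (h (if i == j then a j else b i) - (if i \in s then h (a i) else 0))
    = \prod_(i | i != j) (h (b i) - (if i \in s then h (a i) else 0)).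
  by apply: eq_bigr => i /negbTE ->.
by ring.
Qed.

Section measurable_sets.
Context {d : measure_display} {T : measurableType d}.
Local Open Scope classical_set_scope.

Lemma measurable_bool_set (f : T -> bool) :
  measurable_fun setT f -> measurable [set t | f t].
Proof.
move=> mf; rewrite (_ : [set t | f t] = f @^-1` [set true]); last by apply/seteqP; split.
by rewrite -[X in measurable X]setTI; exact: mf.
Qed.

Lemma measurable_forall {I : finType} (Q : I -> set T) :
  (forall i, measurable (Q i)) -> measurable [set t | forall i, Q i t].
Proof.
move=> mQ; rewrite (_ : [set t | _] = \bigcap_(i in [set: I]) Q i).
  by apply: fin_bigcap_measurable => //; exact: finite_finset.
by apply/seteqP; split => t /= h i //; exact: h.
Qed.

End measurable_sets.

Section conegligible.
Context {d : measure_display} {T : measurableType d} {R : realType}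
  (mu : {measure set T -> \bar R}).
Local Open Scope classical_set_scope.

Lemma negligible_exists {I : finType} (B : I -> set T) :
  (forall i, mu.-negligible (B i)) -> mu.-negligible [set t | exists i, B i t].
Proof.
move=> NB; have seqN (s : seq I) : mu.-negligible [set t | exists2 i, i \in s & B i t].
  elim: s => [|j s IH]; first by apply: negligibleS (negligible_set0 mu) => t [].
  apply: negligibleS (negligibleU (NB j) IH) => t [i]; rewrite in_cons.
  by case/orP => [/eqP-> Bj|si Bi]; [left|right; exists i].
by apply: negligibleS (seqN (enum I)) => t [i Bi]; exists i; rewrite ?mem_enum.
Qed.

Lemma measure_eq_conegligible (A B G : set T) : measurable A -> measurable B ->
  mu.-negligible (~` G) -> A `&` G = B `&` G -> mu A = mu B.
Proof.
move=> mA mB [N [mN N0 GN]] ABG.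
have offN C : measurable C -> mu C = mu (C `\` N).
  move=> mC; rewrite (measureDI mu mC mN).
  rewrite (@subset_measure0 _ _ _ mu (C `&` N) N _ mN _ N0) ?adde0 //.
  exact: measurableI.
have subN C C' : C `&` G = C' `&` G -> C `\` N `<=` C'.
  move=> CG t [Ct Nt]; have Gt : G t by apply: contrapT => /GN.
  by have [] : (C' `&` G) t by rewrite -CG.
rewrite (offN A mA) (offN B mB); congr (mu _).
apply/seteqP; split => t [Ct Nt]; split => //.
  exact: (subN _ _ ABG).
exact: (subN _ _ (esym ABG)).
Qed.

End conegligible.

Lemma probability_setD {d : measure_display} {T : measurableType d} {R : realType}
    (P : probability T R) (A B : set T) :
  measurable A -> measurable B -> (B `<=` A)%classic ->
  P (A `\` B)%classic = (P A - P B)%E.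
Proof.
move=> mA mB BA; rewrite -[in RHS](setIidr BA); apply: measureD => //.
exact: le_lt_trans (probability_le1 P mA) (ltry 1).
Qed.

Definition box_event {R : realType} {n : nat} {T : Type} (X : 'I_n -> T -> R)
    (s : seq 'I_n) (a b : 'I_n -> R) : set T :=
  [set t | forall i, X i t <= b i /\ (i \in s -> a i < X i t)].

Section box.
Context {R : realType} {n : nat} {d : measure_display} {T : measurableType d}
  {X : 'I_n -> T -> R}.
Hypothesis mX : forall i, measurable_fun setT (X i).
Local Open Scope classical_set_scope.
Local Notation box_event := (box_event X).

Lemma measurable_coord_le i c : measurable [set t | X i t <= c].
Proof.
by apply: measurable_bool_set; apply: measurable_fun_ler => //; exact: measurable_cst.
Qed.

Lemma measurable_coord_lt i c : measurable [set t | c < X i t].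
Proof.
by apply: measurable_bool_set; apply: measurable_fun_ltr => //; exact: measurable_cst.
Qed.

Lemma measurable_coord_eq i c : measurable [set t | X i t = c].
Proof.
rewrite (_ : [set t | _] = [set t | X i t == c]); last by apply/seteqP; split => t /= /eqP.
by apply: measurable_bool_set; apply: measurable_fun_eqr => //; exact: measurable_cst.
Qed.

Lemma measurable_box_event s a b : measurable (box_event s a b).
Proof.
apply: measurable_forall => i; case: (boolP (i \in s)) => si.
  rewrite [A in measurable A](_ : _ = [set t | X i t <= b i] `&` [set t | a i < X i t]).
    exact: measurableI (measurable_coord_le _ _) (measurable_coord_lt _ _).
  by apply/seteqP; split => t /= [h h']; split => //; exact: h'.
rewrite [A in measurable A](_ : _ = [set t | X i t <= b i]); first exact: measurable_coord_le.
by apply/seteqP; split => t /=; [case|].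
Qed.

Lemma box_event_cons j s a b : j \notin s ->
  box_event (j :: s) a b =
  box_event s a b `\` box_event s a (fun i => if i == j then a j else b i).
Proof.
move=> js; apply/seteqP; split => t /= h.
  split=> [i|h'].
    by have [? sa] := h i; split=> // si; apply: sa; rewrite in_cons si orbT.
  have [+ _] := h' j; have [_ ] := h j; rewrite eqxx mem_head => /(_ isT); lra.
case: h => h h' i; have [bi sa] := h i.
split=> // /[!in_cons] /orP[/eqP ->|]; last exact: sa.
rewrite ltNge; apply/negP => Xja; apply: h' => k; have [bk sk] := h k.
by case: eqVneq => [->|_]; split => // jk; move: js; rewrite jk.
Qed.

Section product_form.
Variables (P : probability T R) (f g : R -> R) (lam : R).
Hypothesis df : forall x, P [set t | forall i, X i t <= x i] =
  (\prod_i f (x i) + lam * \prod_i g (x i))%:E.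

Lemma measure_box s a b : uniq s -> {in s, forall i, a i <= b i} ->
  P (box_event s a b) = (\prod_i incr f s a b i + lam * \prod_i incr g s a b i)%:E.
Proof.
elim: s b => [|j s IH] b /=.
  move=> _ _; rewrite /incr (_ : box_event [::] a b = [set t | forall i, X i t <= b i]).
    by rewrite df; congr EFin; congr (_ + _ * _); apply: eq_bigr => i _; rewrite in_nil subr0.
  by apply/seteqP; split => t h i; [case: (h i)|split].
case/andP => js us le_ab; set b' := fun i => if i == j then a j else b i.
have le_abs : {in s, forall i, a i <= b i}.
  by move=> i si; apply: le_ab; rewrite in_cons si orbT.
have le_ab' : {in s, forall i, a i <= b' i}.
  by move=> i si; rewrite /b'; case: eqP => [->|_]; last exact: le_abs.
have sub' : box_event s a b' `<=` box_event s a b.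
  move=> t h i; have [bi si] := h i; split=> //; move: bi; rewrite /b'.
  by case: eqP => [->|//]; move/le_trans; apply; apply: le_ab; exact: mem_head.
rewrite box_event_cons //.
rewrite (probability_setD _ _ _ (measurable_box_event _ _ _) (measurable_box_event _ _ _) sub').
by rewrite !IH // -EFinB !prod_incr_cons //; congr EFin; ring.
Qed.

End product_form.
End box.

Section copula_sample.
Context {R : realType} {n : nat} {lam : R} {d : measure_display} {T : measurableType d}
  {P : probability T R} {X : 'I_n -> T -> R}.
Hypotheses (n2 : (1 < n)%N) (XC : has_copula_df P X (Clam lam)).
Local Notation cl := (@clamp01 R).
Local Open Scope classical_set_scope.

Let mX : forall i, measurable_fun setT (X i) := proj1 XC.

Lemma copula_df_prod x : P [set t | forall i, X i t <= x i] =
  (\prod_i cl (x i) + lam * \prod_i (cl (x i) * (1 - cl (x i))))%:E.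
Proof. by rewrite (proj2 XC) /Clam big_split /=; congr EFin; ring. Qed.

Lemma prob_all_le1 : P [set t | forall i, X i t <= 1] = 1%E.
Proof.
rewrite (proj2 XC) (Clam_bigD1 _ _ (Ordinal (ltnW n2))) clamp01_ge1 //.
by rewrite /clam1 subrr mul0r addr0 !mulr1 big1 // => i _; exact: clamp01_ge1.
Qed.

Lemma negligible_not_all_le1 : P.-negligible (~` [set t | forall i, X i t <= 1]).
Proof.
have m1 : measurable [set t | forall i, X i t <= 1].
  by apply: measurable_forall => i; exact: measurable_coord_le.
apply/negligibleP; first exact: measurableC.
by have := probability_setC P m1; rewrite prob_all_le1 subee.
Qed.

Lemma prob_coord_le i c : P [set t | X i t <= c] = (cl c)%:E.
Proof.
pose x j := if j == i then c else 1.
have [k ki] := ord_exists_neq n2 i.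
have mx : measurable [set t | forall j, X j t <= x j].
  by apply: measurable_forall => j; exact: measurable_coord_le.
have -> : P [set t | X i t <= c] = P [set t | forall j, X j t <= x j].
  apply: (measure_eq_conegligible _ _ _ _ (measurable_coord_le mX i c) mx negligible_not_all_le1).
  apply/seteqP; split => t [Xt le1]; split => //.
    by move=> j; rewrite /x; case: eqVneq => [->|_]; [exact: Xt|exact: le1].
  by have := Xt i; rewrite /x eqxx.
rewrite (proj2 XC) (Clam_bigD1 _ _ i) /x eqxx big1 => [|j /negbTE ->]; last exact: clamp01_ge1.
rewrite (bigD1 k) //= (negbTE ki) clamp01_ge1 // subrr mul0r mulr0 /clam1.
by rewrite mulr0 addr0 mulr1 mul1r.
Qed.

Lemma prob_coord_eq i c : P [set t | X i t = c] = 0%E.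
Proof.
apply/le_anti; rewrite measure_ge0 andbT; apply/lee_addgt0Pr => e e0; rewrite add0e.
have mle := measurable_coord_le mX i.
have sub : [set t | X i t = c] `<=` [set t | X i t <= c] `\` [set t | X i t <= c - e].
  by move=> t /= ->; split => // ce; lra.
have sub_ce : [set t | X i t <= c - e] `<=` [set t | X i t <= c] by move=> t /=; lra.
have le_atom : (P [set t | X i t = c] <=
    P ([set t | (X i t <= c)%R] `\` [set t | (X i t <= c - e)%R]))%E.
  by apply: le_measure; rewrite ?inE; [exact: measurable_coord_eq|exact: measurableD|].
rewrite (le_trans le_atom) // probability_setD // !prob_coord_le -EFinB lee_fin.
have ce : c - e <= c by rewrite gerBl ltW.
by have := clamp01_lipschitz _ _ ce; rewrite opprB addrCA subrr addr0.
Qed.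

Lemma negligible_coord_boundary (c : 'I_n -> R) :
  P.-negligible (~` [set t | forall i, X i t <= 1 /\ X i t <> c i]).
Proof.
pose B i := ~` [set t | forall j, X j t <= 1] `|` [set t | X i t = c i].
apply: negligibleS (negligible_exists P B _) => [t /= /existsNP[i /not_andP[]]|i].
- by move=> Xi1; exists i; left => le1; exact: Xi1 (le1 i).
- by move=> /contrapT Xic; exists i; right.
apply: negligibleU negligible_not_all_le1 _.
by apply/negligibleP; [exact: measurable_coord_eq|exact: prob_coord_eq].
Qed.

Variable alpha : 'I_n -> R.
Hypothesis alpha_pm1 : forall i, alpha i = 1 \/ alpha i = -1.

(* [alpha_tail x i] is the marginal tail [P (alpha i * X i > x i)]; the marginals of a
   copula are uniform on [0, 1]. *)
Definition alpha_tail (x : 'I_n -> R) (i : 'I_n) : R :=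
  if alpha i == 1 then 1 - cl (x i) else cl (- x i).

Lemma alpha_tail_ge0 x i : 0 <= alpha_tail x i.
Proof. by rewrite /alpha_tail; case: ifP => _; rewrite ?subr_ge0 ?clamp01_le1 ?clamp01_ge0. Qed.

Lemma alpha_tail_le1 x i : alpha_tail x i <= 1.
Proof. by rewrite /alpha_tail; case: ifP => _; rewrite ?gerBl ?clamp01_ge0 ?clamp01_le1. Qed.

Lemma alpha_tail_antitone x x' i : x i <= x' i -> alpha_tail x' i <= alpha_tail x i.
Proof.
rewrite /alpha_tail => le_x; case: ifP => _; first by rewrite lerD2l lerN2 le_clamp01.
by rewrite le_clamp01 // lerN2.
Qed.

Lemma alpha_tail_max x x' :
  alpha_tail (fun i => Num.max (x i) (x' i)) = alpha_tail x \min alpha_tail x'.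
Proof.
apply/funext => i /=; rewrite {1}/alpha_tail.
have [le_x|lt_x] := leP (x i) (x' i).
  by rewrite min_r //; exact: alpha_tail_antitone.
by rewrite min_l //; apply: alpha_tail_antitone; exact: ltW.
Qed.

Definition alpha_plus : seq 'I_n := [seq i <- enum 'I_n | alpha i == 1].

Lemma mem_alpha_plus i : (i \in alpha_plus) = (alpha i == 1).
Proof. by rewrite mem_filter mem_enum andbT. Qed.

(* The upper endpoint [max (x i) 1] is as good as [1] since [X i <= 1] a.s., and it keeps
   the box nondegenerate. *)
Definition alpha_box_top (x : 'I_n -> R) (i : 'I_n) : R :=
  if alpha i == 1 then Num.max (x i) 1 else - x i.

Lemma prob_alpha_gt_box x :
  P (alpha_gt X alpha x) = P (box_event X alpha_plus x (alpha_box_top x)).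
Proof.
have neq_m1 : ((-1 : R) == 1) = false by apply/negbTE/eqP => h; lra.
apply: (measure_eq_conegligible _ _ _ _ _ (measurable_box_event mX _ _ _)
  (negligible_coord_boundary (fun i => - x i))).
  apply: measurable_forall => i; apply: measurable_bool_set.
  by apply: measurable_fun_ltr => //; apply: measurable_funM => //; exact: measurable_cst.
apply/seteqP; split => t /= [gt good]; split => // i; have [le1 neq] := good i;
  have := gt i; rewrite /alpha_box_top mem_alpha_plus; case: (alpha_pm1 i) => ->;
  rewrite ?eqxx ?neq_m1.
- by rewrite mul1r => xX; split => //; rewrite le_max le1 orbT.
- by rewrite mulN1r => xX; split => //; lra.
- by rewrite mul1r => -[_ ->].
- move=> [Xx _]; rewrite mulN1r.
  suff : X i t < - x i by lra.
  by rewrite lt_neqAle Xx andbT; apply/eqP.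
Qed.

Lemma prob_alpha_gt x : P (alpha_gt X alpha x) =
  (Clam (lam * (-1) ^+ #|[set i | alpha i == 1]%SET|) (alpha_tail x))%:E.
Proof.
have le_xb : {in alpha_plus, forall i, x i <= alpha_box_top x i}.
  by move=> i; rewrite mem_alpha_plus /alpha_box_top => ->; rewrite le_max lexx.
have uniq_plus : uniq alpha_plus by rewrite filter_uniq // enum_uniq.
rewrite prob_alpha_gt_box; apply: (etrans (measure_box mX P cl (fun y => cl y * (1 - cl y))
  lam copula_df_prod _ _ _ uniq_plus le_xb)); congr EFin.
have incr_f i : incr cl alpha_plus x (alpha_box_top x) i = alpha_tail x i.
  rewrite /incr mem_alpha_plus /alpha_tail /alpha_box_top; case: ifP => _; last by rewrite subr0.
  by rewrite clamp01_ge1 // le_max lexx orbT.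
have incr_g i : incr (fun y => cl y * (1 - cl y)) alpha_plus x (alpha_box_top x) i =
    (if alpha i == 1 then -1 else 1) * (alpha_tail x i * (1 - alpha_tail x i)).
  rewrite /incr mem_alpha_plus /alpha_tail /alpha_box_top.
  case: ifP => _; last by rewrite subr0; ring.
  by rewrite clamp01_ge1 ?le_max ?lexx ?orbT //; ring.
have sign : \prod_i (if alpha i == 1 then -1 else 1 : R) =
    (-1) ^+ #|[set i : 'I_n | alpha i == 1]%SET|.
  rewrite -big_mkcond /= (eq_bigl (fun i => i \in [set i : 'I_n | alpha i == 1]%SET)) => [|i].
    by rewrite prodr_const.
  by rewrite inE.
rewrite (eq_bigr _ (fun i _ => incr_f i)) (eq_bigr _ (fun i _ => incr_g i)) !big_split /=.
by rewrite sign /Clam; set s := (-1) ^+ _; ring.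
Qed.

Lemma copula_sample_I_alpha :
  0 <= lam * (-1) ^+ #|[set i | alpha i == 1]%SET| <= 1 -> is_I_alpha P X alpha.
Proof.
set mu := _ * _ => /andP[mu0 mu1] x x' x'' le_x' pos.
rewrite /cond_prob !alpha_gtI !prob_alpha_gt /= !alpha_tail_max.
rewrite prob_alpha_gt lte_fin in pos.
have tail_gt0 i : 0 < alpha_tail x'' i.
  rewrite lt_neqAle alpha_tail_ge0 andbT eq_sym; apply/eqP => /(Clam_eq0 mu) C0.
  by rewrite C0 ltxx in pos.
apply: Clam_min_ratio_antitone => // i.
- exact: alpha_tail_ge0.
- exact: alpha_tail_le1.
- exact: alpha_tail_antitone.
- exact: alpha_tail_le1.
Qed.

End copula_sample.

Theorem mainTheorem8 (R : realType) (n : nat) (alpha : 'I_n -> R) :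
  (2 <= n)%N ->
  (forall i, alpha i = 1 \/ alpha i = -1) ->
  (~~ odd #|[set i : 'I_n | alpha i == 1]| ->
     forall lam : R, 0 <= lam <= 1 -> copula_I_alpha (Clam lam) alpha) /\
  (odd #|[set i : 'I_n | alpha i == 1]| ->
     forall lam : R, -1 <= lam <= 0 -> copula_I_alpha (Clam lam) alpha).
Proof.
move=> n2 alpha_pm1.
have I_alpha lam : 0 <= lam * (-1) ^+ #|[set i | alpha i == 1]| <= 1 ->
    copula_I_alpha (Clam lam) alpha.
  by move=> mu01 d T P X XC; exact: (copula_sample_I_alpha n2 XC _ alpha_pm1 mu01).
split=> J_odd lam /andP[lam0 lam1]; apply: I_alpha; rewrite -signr_odd.
  by rewrite (negbTE J_odd) expr0 mulr1 lam0 lam1.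
by rewrite J_odd expr1 mulrN1 oppr_ge0 lam1 lerNl.
Qed.
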